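(* Let $u^*:\Omega\to\mathbb{R}$, the sample points $\bm x_1,\dots,\bm x_{N_1}$, the affine functions $u_1,\dots,u_{N_1}$, the index sets $J_{\geq,i},J_{\leq,i}$ and the approximations $\hat f_{\mathrm{L,d}},\hat f_{\mathrm{L,c}}$ be as in the context (with $N_s=N_1$). Suppose every sample point $\bm x_i$ lies in the interior of its UO region $\Gamma(\bm x_i)$, and suppose $$\min_{j\in J_{\geq,i}}u_j(\bm x_k)\le u_k(\bm x_k)\quad\text{and}\quad \max_{j\in J_{\leq,i}}u_j(\bm x_k)\ge u_k(\bm x_k)\qquad\forall\, i,k\in\{1,\dots,N_1\}.$$ Then for every $i\in\{1,\dots,N_1\}$, $$\hat f_{\mathrm{L,d}}(\bm x)=u^*(\bm x)\quad\text{and}\quad \hat f_{\mathrm{L,c}}(\bm x)=u^*(\bm x)\qquad\forall\,\bm x\in\Gamma(\bm x_i).$$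
   Context: Let $\Omega\subseteq\mathbb{R}^{n_x}$ be a convex polyhedron (a hyperbox) and $u^*:\Omega\to\mathbb{R}$ a continuous piecewise affine (PWA) function: $\Omega$ is the union of finitely many closed convex polyhedra (local regions) with pairwise disjoint interiors, and on each local region $u^*$ coincides with an affine function. (In the paper $u^*$ is the first input component of the explicit linear MPC optimal control law, which is continuous PWA.) Let $\ell_1,\dots,\ell_M$ be the distinct affine functions appearing as local pieces of $u^*$. A unique order (UO) region is a closed convex polyhedron contained in a local region such that, for all $a,b$, the order (sign of $\ell_a-\ell_b$) does not change in its interior; $\Omega$ is the union of finitely many UO regions. A sample point $\bm x_i\in\Omega$ lies in the interior of a UO region iff no two distinct functions among $\ell_1,\dots,\ell_M$ take the same value at $\bm x_i$; this UO region is denoted $\Gamma(\bm x_i)$. To each sample point $\bm x_i$ ($i=1,\dots,N_s$) is associated the affine function $u_i$ equal to the local piece of $u^*$ on $\Gamma(\bm x_i)$, so $u_i(\bm x)=u^*(\bm x)$ on $\Gamma(\bm x_i)$. Define $J_{\geq,i}=\{j\in\{1,\dots,N_s\}: u_j(\bm x_i)\ge u_i(\bm x_i)\}$, $J_{\leq,i}=\{j\in\{1,\dots,N_s\}: u_j(\bm x_i)\le u_i(\bm x_i)\}$, the disjunctive lattice PWA approximation $\hat f_{\mathrm{L,d}}(\bm x)=\max_{i=1,\dots,N_s}\min_{j\in J_{\geq,i}}u_j(\bm x)$ and the conjunctive lattice PWA approximation $\hat f_{\mathrm{L,c}}(\bm x)=\min_{i=1,\dots,N_s}\max_{j\in J_{\leq,i}}u_j(\bm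 x)$. *)

From HB Require Import structures.
From mathcomp Require Import all_boot all_order all_algebra.
From mathcomp Require Import reals.
Set Implicit Arguments. Unset Strict Implicit. Unset Printing Implicit Defensive.
Import Order.TTheory GRing.Theory Num.Theory.
Local Open Scope ring_scope.

Section Defs.
Variables (R : realType) (n : nat).

Definition pt := 'cV[R]_n.
Definition pset := pt -> Prop.

Definition affine := ('cV[R]_n * R)%type.
Definition aff_eval (l : affine) (x : pt) : R := (l.1^T *m x) 0 0 + l.2.

Definition is_polyhedron (S : pset) : Prop :=
  exists (m : nat) (A : 'M[R]_(m, n)) (c : 'cV[R]_m),
    forall x, S x <-> (forall r, (A *m x) r 0 <= c r 0).

Definition hyperbox (lo hi : pt) : pset :=
  fun x => forall j, lo j 0 <= x j 0 <= hi j 0.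

Definition interior (S : pset) : pset :=
  fun x => exists2 e : R, 0 < e &
    forall y : pt, (forall j, `|y j 0 - x j 0| < e) -> S y.

Definition is_PWA (Omega : pset) (ustar : pt -> R) (K : nat)
  (P : 'I_K -> pset) (L : 'I_K -> affine) : Prop :=
  [/\ forall k, is_polyhedron (P k),
      forall x, Omega x <-> (exists k, P k x),
      forall k k', k != k' -> forall x, ~ (interior (P k) x /\ interior (P k') x)
    & forall k x, P k x -> ustar x = aff_eval (L k) x].

Definition is_UO_region (K : nat) (P : 'I_K -> pset) (L : 'I_K -> affine)
  (G : pset) : Prop :=
  [/\ is_polyhedron G,
      exists k, forall x, G x -> P k x
    & forall (a b : 'I_K) (x y : pt), interior G x -> interior G y ->
        Num.sg (aff_eval (L a) x - aff_eval (L b) x) =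
        Num.sg (aff_eval (L a) y - aff_eval (L b) y)].

(* Minimum / maximum of a (nonempty) finite list of reals; the value on the
   empty list is an irrelevant default (the lists used below are never empty). *)
Definition minl (s : seq R) : R :=
  if s is a :: s' then foldr Num.min a s' else 0.
Definition maxl (s : seq R) : R :=
  if s is a :: s' then foldr Num.max a s' else 0.

Variables (N : nat) (xs : 'I_N -> pt) (u : 'I_N -> affine).

Definition J_ge (i : 'I_N) : seq 'I_N :=
  [seq j <- enum 'I_N | aff_eval (u i) (xs i) <= aff_eval (u j) (xs i)].
Definition J_le (i : 'I_N) : seq 'I_N :=
  [seq j <- enum 'I_N | aff_eval (u j) (xs i) <= aff_eval (u i) (xs i)].

Definition minJ_ge (i : 'I_N) (x : pt) : R := minl [seq aff_eval (u j) x | j <- J_ge i].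
Definition maxJ_le (i : 'I_N) (x : pt) : R := maxl [seq aff_eval (u j) x | j <- J_le i].

Definition fLd (x : pt) : R := maxl [seq minJ_ge i x | i <- enum 'I_N].
Definition fLc (x : pt) : R := minl [seq maxJ_le i x | i <- enum 'I_N].

End Defs.

(* The pieces u_j are affine and, since x_j is interior to Gamma(x_j), each
   coincides everywhere with a local piece of u*.  On a UO region the order of
   the local pieces is fixed on the interior and, by convexity, persists on the
   whole closed region: if l1(p) <= l2(p) at an interior p but l1(x) > l2(x),
   the point of the segment [x, p] where l2 - l1 = (l2 - l1)(x) / 2 is interior
   with the wrong sign.  Hence every comparison between the u_j made at x_i
   holds throughout Gamma(x_i).  In the max-min formula the term i is then
   >= u_i there, and the hypothesis makes every term k <= u_i: the minimiser
   j of term k at x_i satisfies u_j(x_i) <= u_i(x_i), hence u_j <= u_i on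
   Gamma(x_i).  The min-max formula is symmetric. *)
From mathcomp Require Import all_boot all_order all_algebra.
From mathcomp Require Import reals.
From mathcomp Require Import ring lra.
Import Order.TTheory GRing.Theory Num.Theory.
Set Implicit Arguments. Unset Strict Implicit. Unset Printing Implicit Defensive.
Local Open Scope ring_scope.

Section MinMaxList.
Variable R : realType.
Implicit Types (s : seq R) (v c : R).

Lemma minl_le s v : v \in s -> minl s <= v.
Proof.
case: s => // a s /=.
elim: s a v => [|b s IH] a v /=; first by rewrite inE => /eqP ->.
rewrite !inE ge_min => /or3P [/eqP ->|/eqP ->|vs].
- by rewrite IH ?orbT // inE eqxx.
- by rewrite lexx.
- by rewrite IH ?orbT // inE vs orbT.
Qed.

Lemma maxl_ge s v : v \in s -> v <= maxl s.
Proof.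
case: s => // a s /=.
elim: s a v => [|b s IH] a v /=; first by rewrite inE => /eqP ->.
rewrite !inE le_max => /or3P [/eqP ->|/eqP ->|vs].
- by rewrite IH ?orbT // inE eqxx.
- by rewrite lexx.
- by rewrite IH ?orbT // inE vs orbT.
Qed.

Lemma minl_mem s : s != [::] -> minl s \in s.
Proof.
case: s => // a s _ /=.
elim: s => [|b s IH] /=; first by rewrite inE.
rewrite !inE /Order.min; case: ifP => _; rewrite ?eqxx ?orbT //.
all: by move: IH; rewrite inE => /orP [->|->]; rewrite ?orbT.
Qed.

Lemma maxl_mem s : s != [::] -> maxl s \in s.
Proof.
case: s => // a s _ /=.
elim: s => [|b s IH] /=; first by rewrite inE.
rewrite !inE /Order.max; case: ifP => _; rewrite ?eqxx ?orbT //.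
all: by move: IH; rewrite inE => /orP [->|->]; rewrite ?orbT.
Qed.

Lemma le_minl s c : s != [::] -> {in s, forall v, c <= v} -> c <= minl s.
Proof. by move=> s0 Hs; apply/Hs/minl_mem. Qed.

Lemma maxl_le s c : s != [::] -> {in s, forall v, v <= c} -> maxl s <= c.
Proof. by move=> s0 Hs; apply/Hs/maxl_mem. Qed.

End MinMaxList.

Lemma map_nonnil (T S : eqType) (f : T -> S) (s : seq T) a :
  a \in s -> [seq f y | y <- s] != [::].
Proof. by case: s. Qed.

Section AffineGeometry.
Variables (R : realType) (n : nat).
Implicit Types (G : pset R n) (l : affine R n) (x y p : pt R n).

Lemma aff_eval_segment l x y t :
  aff_eval l (x + t *: (y - x)) = aff_eval l x + t * (aff_eval l y - aff_eval l x).
Proof. by rewrite /aff_eval mulmxDr -scalemxAr mulmxBr !mxE; ring. Qed.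

Lemma polyhedron_convex G x y t : is_polyhedron G -> G x -> G y ->
  0 <= t <= 1 -> G (x + t *: (y - x)).
Proof.
move=> [m [A [c HG]]] /HG Gx /HG Gy /andP [t0 t1].
apply/HG => r; move: (Gx r) (Gy r).
rewrite mulmxDr -scalemxAr mulmxBr !mxE; nra.
Qed.

(* The box of radius t e around the moved point is the image, under the
   homothety of centre x and ratio t, of the box of radius e around p. *)
Lemma interior_segment G x p t : is_polyhedron G -> G x ->
  interior G p -> 0 < t <= 1 -> interior G (x + t *: (p - x)).
Proof.
move=> HG Gx [e e0 Hp] /andP [t0 t1].
exists (t * e) => [|y ye]; first exact: mulr_gt0.
set z := x + t *: (p - x); set w := p + t^-1 *: (y - z).
have -> : y = x + t *: (w - x).
  by apply/matrixP => j k; rewrite /w /z !mxE; field; exact: lt0r_neq0.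
apply: polyhedron_convex; rewrite ?(ltW t0) ?t1 //.
apply: Hp => j; rewrite /w !mxE addrAC subrr add0r normrM gtr0_norm ?invr_gt0 //.
by rewrite mulrC ltr_pdivrMr // [e * t]mulrC; have := ye j; rewrite !mxE.
Qed.

Lemma aff_eval_eq_near l1 l2 p e : 0 < e ->
  (forall y, (forall j, `|y j 0 - p j 0| < e) -> aff_eval l1 y = aff_eval l2 y) ->
  aff_eval l1 =1 aff_eval l2.
Proof.
move=> e0 Hnear y.
set M := \sum_j `|y j 0 - p j 0|.
have HM j : `|y j 0 - p j 0| <= M.
  by rewrite /M (bigD1 j) //= lerDl; exact: sumr_ge0.
have M1 : 0 < M + 1 by rewrite ltr_wpDl // sumr_ge0.
set t := e / (M + 1).
have t0 : 0 < t by exact: divr_gt0.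
have Ep : aff_eval l1 p = aff_eval l2 p by apply: Hnear => j; rewrite subrr normr0.
have : aff_eval l1 (p + t *: (y - p)) = aff_eval l2 (p + t *: (y - p)).
  apply: Hnear => j; rewrite !mxE addrAC subrr add0r normrM gtr0_norm //.
  apply: (le_lt_trans (y := t * M)); first by rewrite ler_pM2l.
  by rewrite /t mulrAC ltr_pdivrMr // ltr_pM2l // ltrDl.
rewrite !aff_eval_segment Ep => /addrI /(mulfI (lt0r_neq0 t0)) E.
by rewrite -[aff_eval l1 y](subrK (aff_eval l2 p)) E subrK.
Qed.

Lemma aff_le_from_interior G l1 l2 p x :
  is_polyhedron G -> interior G p -> G x ->
  (forall y z, interior G y -> interior G z ->
     Num.sg (aff_eval l2 y - aff_eval l1 y) = Num.sg (aff_eval l2 z - aff_eval l1 z)) ->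
  aff_eval l1 p <= aff_eval l2 p -> aff_eval l1 x <= aff_eval l2 x.
Proof.
move=> HG Ip Gx sg_const le_p; rewrite leNgt; apply/negP => lt_x.
set gx := aff_eval l2 x - aff_eval l1 x; set gp := aff_eval l2 p - aff_eval l1 p.
have gx0 : gx < 0 by rewrite subr_lt0.
have gp0 : 0 <= gp by rewrite subr_ge0.
have d0 : 0 < gp - gx by lra.
set t := - gx / (2 * (gp - gx)).
have t0 : 0 < t by rewrite divr_gt0 ?oppr_gt0 // mulr_gt0.
have t1 : t <= 1 by rewrite ler_pdivrMr ?mulr_gt0 //; lra.
have Iz : interior G (x + t *: (p - x)) by apply: interior_segment; rewrite ?t0.
have := sg_const _ _ Iz Ip; rewrite !aff_eval_segment -/gp.
have -> : aff_eval l2 x + t * (aff_eval l2 p - aff_eval l2 x) -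
    (aff_eval l1 x + t * (aff_eval l1 p - aff_eval l1 x)) = gx / 2.
  by rewrite /t /gx /gp; field; rewrite gt_eqF.
move=> sg_eq; have : 0 <= Num.sg (gx / 2) by rewrite sg_eq sgr_ge0.
by rewrite sgr_ge0 pmulr_lge0 ?invr_gt0 // leNgt gx0.
Qed.

End AffineGeometry.

Section UORegion.
Variables (R : realType) (n K : nat) (P : 'I_K -> pset R n) (L : 'I_K -> affine R n).
Variable G : pset R n.
Hypothesis UO_G : is_UO_region P L G.

Lemma UO_piece_everywhere (ustar : pt R n -> R) l p :
  (forall k x, P k x -> ustar x = aff_eval (L k) x) -> interior G p ->
  (forall x, G x -> aff_eval l x = ustar x) ->
  exists k, aff_eval l =1 aff_eval (L k).
Proof.
move=> ustarE [e e0 near_p] lE; case: UO_G => _ [k GP] _.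
exists k; apply: (aff_eval_eq_near e0) => y /near_p Gy.
by rewrite lE // (ustarE k) //; apply: GP.
Qed.

Lemma UO_le_transfer l1 l2 p x : interior G p -> G x ->
  (exists a, aff_eval l1 =1 aff_eval (L a)) ->
  (exists b, aff_eval l2 =1 aff_eval (L b)) ->
  aff_eval l1 p <= aff_eval l2 p -> aff_eval l1 x <= aff_eval l2 x.
Proof.
move=> Ip Gx [a E1] [b E2]; rewrite !E1 !E2.
case: UO_G => HG _ sg_const.
by apply: (aff_le_from_interior HG Ip Gx) => y z Iy Iz; apply: sg_const.
Qed.

End UORegion.

Section LatticeApproximation.
Variables (R : realType) (n N : nat) (xs : 'I_N -> pt R n) (u : 'I_N -> affine R n).
Variables (i : 'I_N) (x : pt R n).
Hypothesis order_at :
  forall a b, aff_eval (u a) (xs i) <= aff_eval (u b) (xs i) ->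
              aff_eval (u a) x <= aff_eval (u b) x.

Lemma J_ge_self k : k \in J_ge xs u k.
Proof. by rewrite mem_filter lexx mem_enum. Qed.

Lemma J_le_self k : k \in J_le xs u k.
Proof. by rewrite mem_filter lexx mem_enum. Qed.

Lemma fLd_eq : (forall k, minJ_ge xs u k (xs i) <= aff_eval (u i) (xs i)) ->
  fLd xs u x = aff_eval (u i) x.
Proof.
move=> min_le; apply/eqP; rewrite eq_le; apply/andP; split.
- apply: maxl_le => [|_ /mapP [k _ ->]]; first exact: (map_nonnil _ (mem_enum _ i)).
  have /mapP [j jJ jmin] := minl_mem (map_nonnil (fun j => aff_eval (u j) (xs i)) (J_ge_self k)).
  apply: (le_trans (y := aff_eval (u j) x)); first by apply/minl_le/map_f.
  by apply: order_at; rewrite -jmin; exact: min_le.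
- apply: (le_trans (y := minJ_ge xs u i x)); last by apply/maxl_ge/map_f/mem_enum.
  apply: le_minl => [|_ /mapP [j jJ ->]]; first exact: map_nonnil (J_ge_self i).
  by apply: order_at; move: jJ; rewrite mem_filter => /andP [].
Qed.

Lemma fLc_eq : (forall k, aff_eval (u i) (xs i) <= maxJ_le xs u k (xs i)) ->
  fLc xs u x = aff_eval (u i) x.
Proof.
move=> ge_max; apply/eqP; rewrite eq_le; apply/andP; split.
- apply: (le_trans (y := maxJ_le xs u i x)); first by apply/minl_le/map_f/mem_enum.
  apply: maxl_le => [|_ /mapP [j jJ ->]]; first exact: map_nonnil (J_le_self i).
  by apply: order_at; move: jJ; rewrite mem_filter => /andP [].
- apply: le_minl => [|_ /mapP [k _ ->]]; first exact: (map_nonnil _ (mem_enum _ i)).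
  have /mapP [j jJ jmax] := maxl_mem (map_nonnil (fun j => aff_eval (u j) (xs i)) (J_le_self k)).
  apply: (le_trans (y := aff_eval (u j) x)); last by apply/maxl_ge/map_f.
  by apply: order_at; rewrite -jmax; exact: ge_max.
Qed.

End LatticeApproximation.

Theorem mainTheorem1 (R : realType) (n : nat) (lo hi : 'cV[R]_n)
  (ustar : 'cV[R]_n -> R) (K : nat) (P : 'I_K -> pset R n) (L : 'I_K -> affine R n)
  (N1 : nat) (xs : 'I_N1 -> 'cV[R]_n) (Gam : 'I_N1 -> pset R n)
  (u : 'I_N1 -> affine R n) :
  is_PWA (hyperbox lo hi) ustar P L ->
  (forall i, hyperbox lo hi (xs i)) ->
  (forall i, is_UO_region P L (Gam i)) ->
  (forall i, interior (Gam i) (xs i)) ->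
  (forall i x, Gam i x -> aff_eval (u i) x = ustar x) ->
  (forall i k, minJ_ge xs u i (xs k) <= aff_eval (u k) (xs k) /\
               aff_eval (u k) (xs k) <= maxJ_le xs u i (xs k)) ->
  forall i x, Gam i x -> fLd xs u x = ustar x /\ fLc xs u x = ustar x.
Proof.
move=> [_ _ _ ustarE] _ UO int_xs uE bounds i x Gx.
have piece j : exists k, aff_eval (u j) =1 aff_eval (L k).
  exact: (UO_piece_everywhere (UO j) ustarE (int_xs j) (uE j)).
have order_at a b : aff_eval (u a) (xs i) <= aff_eval (u b) (xs i) ->
    aff_eval (u a) x <= aff_eval (u b) x.
  exact: (UO_le_transfer (UO i) (int_xs i) Gx (piece a) (piece b)).
rewrite -(uE i x Gx); split; [apply: fLd_eq | apply: fLc_eq] => // k;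
  by case: (bounds k i).
Qed.
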